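(* Let $n\ge1$ and fix $\beta\in\partial\mathbb{D}$. On the manifold $\mathbb{D}^{n-1}$ of Verblunsky coefficients $(\alpha_0,\dots,\alpha_{n-2})$ with the Poisson bracket described in the context, let $P_n,Q_n,C_n,S_n$ be as in the context. Then for all $z,w$: \[ \{C_n(z),C_n(w)\}=0=\{S_n(z),S_n(w)\},\qquad \{C_n(z),S_n(w)\}=-i\,\frac{C_n(z)\,wS_n(w)-C_n(w)\,zS_n(z)}{z-w}, \] \[ \{P_n(z),P_n(w)\}=0=\{Q_n(z),Q_n(w)\}, \] \[ \{P_n(z),Q_n(w)\}=-\frac{i}{2}\Bigl[\bigl(P_n(z)Q_n(w)-P_n(w)Q_n(z)\bigr)\frac{z+w}{z-w}-Q_n(z)Q_n(w)+P_n(z)P_n(w)\Bigr]. \]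
   Context: Let $\rho_j=(1-|\alpha_j|^2)^{1/2}$. The Poisson bracket of (complex-valued) smooth functions of $\alpha_0,\dots,\alpha_{n-2}$ is $\{f,g\}=\sum_{j=0}^{n-2}i\rho_j^2\bigl(\frac{\partial f}{\partial\bar\alpha_j}\frac{\partial g}{\partial\alpha_j}-\frac{\partial f}{\partial\alpha_j}\frac{\partial g}{\partial\bar\alpha_j}\bigr)$ with Wirtinger derivatives; equivalently $\{\alpha_j,\alpha_k\}=\{\bar\alpha_j,\bar\alpha_k\}=0$, $\{\alpha_j,\bar\alpha_k\}=-i\rho_j^2\delta_{jk}$. Auxiliary variables $z,w$ are held fixed. The monic OPUC satisfy $\Phi_0=1$, $\Phi_{k+1}(z)=z\Phi_k(z)-\bar\alpha_k\Phi_k^*(z)$ with $\Phi_k^*(z)=z^k\overline{\Phi_k(1/\bar z)}$; $\Psi_k$ satisfies the same recursion with $\alpha_j$ replaced by $-\alpha_j$. Then $P_n(z)=z\Phi_{n-1}(z)-\bar\beta\Phi_{n-1}^*(z)$, $Q_n(z)=z\Psi_{n-1}(z)+\bar\beta\Psi_{n-1}^*(z)$, $C_n=\tfrac12(P_n+Q_n)$, $S_n=\tfrac12(P_n-Q_n)$. Identities with difference quotients are identities of polynomials in $z,w$. *)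

From HB Require Import structures.
From mathcomp Require Import all_boot all_order all_algebra.
From mathcomp Require Import mpoly.
Set Implicit Arguments. Unset Strict Implicit. Unset Printing Implicit Defensive.
Import Order.TTheory GRing.Theory Num.Theory.
Local Open Scope ring_scope.

(* Throughout, m = n-1 is the number of Verblunsky coefficients
   alpha_0, ..., alpha_(m-1).  Functions of the alphas (and of the auxiliary
   variables z, w) are polynomials in the formal variables
     alpha_j  = 'X_(2j),   conj(alpha_j) = 'X_(2j+1)   (j < m),
     z = 'X_(2m),          w = 'X_(2m+1)
   over a field C of complex numbers (numClosedFieldType). *)

Section OPUC.
Variable C : numClosedFieldType.
Variable m : nat.

Definition NV := m.*2.+2.
Definition M := {mpoly C[NV]}.

Definition va (j : nat) : 'I_NV := inord (j.*2).
Definition vb (j : nat) : 'I_NV := inord (j.*2.+1).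
Definition vz : 'I_NV := inord (m.*2).
Definition vw : 'I_NV := inord (m.*2.+1).

Definition alpha (j : nat) : M := 'X_(va j).
Definition zz : M := 'X_vz.
Definition ww : M := 'X_vw.

(* complex conjugation of functions: conjugate the coefficients and
   exchange alpha_j <-> conj(alpha_j); z, w are fixed (not conjugated) *)
Definition swapv (i : 'I_NV) : M :=
  if (i < m.*2)%N then 'X_(inord (if odd i then i.-1 else i.+1) : 'I_NV)
  else 'X_i.
Definition cj (p : M) : M := mmap (fun c : C => (Num.conj c)%:MP) swapv p.

(* Poisson bracket, with Wirtinger derivatives d/d alpha_j = mderiv (va j),
   d/d conj(alpha_j) = mderiv (vb j), and rho_j^2 = 1 - alpha_j conj(alpha_j) *)
Definition pbr (f g : M) : M :=
  \sum_(j < m)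
    'i%:MP * (1 - alpha j * cj (alpha j)) *
      (mderiv (vb j) f * mderiv (va j) g - mderiv (va j) f * mderiv (vb j) g).

(* Phi^*_k for a polynomial Phi (of degree <= k) in the variable z:
   z^k conj(Phi(1/conj z)) = sum_i conj(Phi_(k-i)) z^i *)
Definition rstar (k : nat) (p : {poly M}) : {poly M} :=
  \poly_(i < k.+1) cj (p`_(k - i)).

(* monic OPUC; s = 1 gives Phi_k, s = -1 gives Psi_k (alpha_j -> -alpha_j,
   hence conj(alpha_j) -> -conj(alpha_j)) *)
Fixpoint opuc (s : C) (k : nat) : {poly M} :=
  match k with
  | 0 => 1
  | k'.+1 => 'X * opuc s k' - (cj (s%:MP * alpha k'))%:P * rstar k' (opuc s k')
  end.

Definition Phi k := opuc 1 k.
Definition Psi k := opuc (-1) k.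

Definition Pn (beta : C) : {poly M} :=
  'X * Phi m - (Num.conj beta)%:MP%:P * rstar m (Phi m).
Definition Qn (beta : C) : {poly M} :=
  'X * Psi m + (Num.conj beta)%:MP%:P * rstar m (Psi m).
Definition Cn (beta : C) : {poly M} := (2^-1 : C)%:MP%:P * (Pn beta + Qn beta).
Definition Sn (beta : C) : {poly M} := (2^-1 : C)%:MP%:P * (Pn beta - Qn beta).

End OPUC.

(* The Szego recursion reads (Phi_(k+1), Phi_(k+1)^* ) = T_k (Phi_k, Phi_k^* ) with
   T_k(t) = [[t, -conj alpha_k], [-alpha_k t, 1]], and (Psi_k, -Psi_k^* ) obeys the same
   recursion.  Hence P_n, Q_n, C_n, S_n evaluated at t are all of the form
   [para beta p t]: the first component of one further step, with alpha_(n-1) := beta,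
   applied to T_(n-2)(t) ... T_0(t) p, for p = (1,1), (1,-1), (1,0), (0,1) respectively.
   Since T_k only involves alpha_k, the brackets between the entries of
   X = T_(k-1)(z) ... T_0(z) p and Y = T_(k-1)(w) ... T_0(w) q satisfy a closed recursion
   in k (Leibniz rule for the coordinates below k, one explicit term for alpha_k), which
   solves to (z - w) {X_1, Y_1} = -i det(p, q) (w C(z) S(w) - z S(z) C(w)) and similar
   formulas for the other entries.  The last step has constant coefficients, so every
   bracket in the theorem equals -i det(p, q) (w C(z) S(w) - z S(z) C(w)) / (z - w) for
   the appropriate p, q, and the identities follow by ring arithmetic. *)

From HB Require Import structures.
From mathcomp Require Import all_boot all_order all_algebra.
From mathcomp Require Import mpoly ring zify.
Set Implicit Arguments. Unset Strict Implicit. Unset Printing Implicit Defensive.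
Import Order.TTheory GRing.Theory Num.Theory.
Local Open Scope ring_scope.

Lemma mulr_lincomb4 (R : comRingType) (u x1 x2 x3 x4 y1 y2 y3 y4 : R) :
  u * x1 = y1 -> u * x2 = y2 -> u * x3 = y3 -> u * x4 = y4 ->
  forall e1 e2 e3 e4 : R,
  u * (e1 * x1 + e2 * x2 + e3 * x3 + e4 * x4) = e1 * y1 + e2 * y2 + e3 * y3 + e4 * y4.
Proof. by move=> <- <- <- <- e1 e2 e3 e4; ring. Qed.

Section Verblunsky.
Variables (C : numClosedFieldType) (m : nat).
Local Notation M := (M C m).
Local Notation a j := (alpha C m j).
Local Notation b j := ('X_(vb m j) : M).
Local Notation z := (zz C m).
Local Notation w := (ww C m).

Definition conj_mpolyC : {rmorphism C -> M} := (@mpolyC (NV m) C \o Num.conj)%FUN.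

HB.instance Definition _ := GRing.RMorphism.copy (@cj C m) (mmap conj_mpolyC (@swapv C m)).

Let cjE (p : M) : cj p = mmap conj_mpolyC (@swapv C m) p. Proof. by []. Qed.

Lemma cjC (c : C) : cj (c%:MP : M) = (Num.conj c)%:MP.
Proof. by rewrite cjE mmapC. Qed.

Lemma cjX (i : 'I_(NV m)) : cj ('X_i : M) = @swapv C m i.
Proof. by rewrite cjE mmapX mmap1U. Qed.

Lemma val_va j : (j <= m)%N -> va m j = j.*2 :> nat.
Proof. by move=> le_jm; rewrite inordK //; lia. Qed.

Lemma val_vb j : (j <= m)%N -> vb m j = j.*2.+1 :> nat.
Proof. by move=> le_jm; rewrite inordK //; lia. Qed.

Lemma val_vz : vz m = m.*2 :> nat.
Proof. by rewrite inordK //; lia. Qed.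

Lemma val_vw : vw m = m.*2.+1 :> nat.
Proof. by rewrite inordK //; lia. Qed.

Lemma cj_alpha j : (j < m)%N -> cj (a j) = b j.
Proof.
by move=> lt_jm; rewrite cjX /swapv (val_va (ltnW lt_jm)) ltn_double lt_jm odd_double.
Qed.

Lemma cj_b j : (j < m)%N -> cj (b j) = a j.
Proof.
move=> lt_jm; rewrite cjX /swapv (val_vb (ltnW lt_jm)) /= odd_double /=.
by rewrite ifT //; lia.
Qed.

Lemma cjXK (i : 'I_(NV m)) : cj (cj ('X_i : M)) = 'X_i.
Proof.
have [lt_i|ge_i] := ltnP i m.*2; last first.
  by rewrite cjX /swapv ltnNge ge_i /= cjX /swapv ltnNge ge_i.
have lt_half : (i./2 < m)%N by move: (odd_double_half i); lia.
have -> : i = if odd i then vb m i./2 else va m i./2.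
  apply: val_inj; rewrite /= -[LHS]odd_double_half.
  by case: ifP => _; rewrite ?(val_va (ltnW lt_half)) ?(val_vb (ltnW lt_half)).
by case: ifP => _; rewrite ?(cj_alpha lt_half) ?(cj_b lt_half) ?(cj_alpha lt_half).
Qed.

Lemma cjK : involutive (@cj C m).
Proof.
elim/mpolyind => [|c mm p _ _ IHp]; first by rewrite !rmorph0.
rewrite !rmorphD /= IHp -mul_mpolyC !rmorphM /= !cjC conjCK mpolyXE_id !rmorph_prod.
by congr (_ * _ + _); apply: eq_bigr => i _; rewrite !rmorphXn /= cjXK.
Qed.

Definition alpha_indep (j : nat) : {pred M} :=
  [pred p | (mderiv (va m j) p == 0) && (mderiv (vb m j) p == 0)].

Lemma alpha_indepP j p :
  reflect (mderiv (va m j) p = 0 /\ mderiv (vb m j) p = 0) (p \in alpha_indep j).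
Proof. by rewrite inE; apply: (iffP andP) => -[/eqP-> /eqP->]. Qed.

Lemma alpha_indep_subring_closed j : subring_closed (alpha_indep j).
Proof.
split=> [|p q /alpha_indepP[pa pb] /alpha_indepP[qa qb]|
          p q /alpha_indepP[pa pb] /alpha_indepP[qa qb]]; apply/alpha_indepP.
- by rewrite -mpolyC1 !mderivC.
- by rewrite !mderivB pa pb qa qb subrr.
- by rewrite !mderivM pa pb qa qb !(mulr0, mul0r) addr0.
Qed.

HB.instance Definition _ j :=
  GRing.isSubringClosed.Build M (alpha_indep j) (alpha_indep_subring_closed j).

Lemma mderivXE (i k : 'I_(NV m)) : mderiv i ('X_k : M) = (k == i)%:R.
Proof.
rewrite mderivX mnm1E; case: eqP => [->|_]; last by rewrite scale0r.
have -> : (U_(i) - U_(i) = 0)%MM by apply/mnmP => l; rewrite !mnmE subnn.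
by rewrite mpolyX0 scale1r.
Qed.

Lemma alpha_indepX j (k : 'I_(NV m)) : (j <= m)%N ->
  (k : nat) != j.*2 -> (k : nat) != j.*2.+1 -> 'X_k \in alpha_indep j.
Proof.
move=> le_jm ne_a ne_b; rewrite inE !mderivXE.
by rewrite -!(inj_eq val_inj) /= val_va ?val_vb // (negbTE ne_a) (negbTE ne_b) eqxx.
Qed.

Lemma alpha_indepC j (c : C) : c%:MP \in alpha_indep j.
Proof. by rewrite inE !mderivC eqxx. Qed.

Lemma alpha_indep_z j : (j < m)%N -> z \in alpha_indep j.
Proof. by move=> lt_jm; apply: alpha_indepX; rewrite ?val_vz; lia. Qed.

Lemma alpha_indep_w j : (j < m)%N -> w \in alpha_indep j.
Proof. by move=> lt_jm; apply: alpha_indepX; rewrite ?val_vw; lia. Qed.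

Lemma alpha_indep_a j k : (j < m)%N -> (k < m)%N -> j != k -> a k \in alpha_indep j.
Proof. by move=> lt_jm lt_km ne_jk; apply: alpha_indepX; rewrite ?val_va; lia. Qed.

Lemma alpha_indep_b j k : (j < m)%N -> (k < m)%N -> j != k -> b k \in alpha_indep j.
Proof. by move=> lt_jm lt_km ne_jk; apply: alpha_indepX; rewrite ?val_vb; lia. Qed.

Definition alpha_indep_upto k : {pred M} :=
  [pred p | [forall j : 'I_k, p \in alpha_indep j]].

Lemma alpha_indep_uptoP k p :
  reflect (forall j, (j < k)%N -> p \in alpha_indep j) (p \in alpha_indep_upto k).
Proof.
apply: (iffP forallP) => [p_indep j lt_jk | p_indep j]; last exact: p_indep.
exact: (p_indep (Ordinal lt_jk)).
Qed.

Lemma alpha_indep_upto_subring_closed k : subring_closed (alpha_indep_upto k).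
Proof.
split=> [|p q /alpha_indep_uptoP p_indep /alpha_indep_uptoP q_indep|
          p q /alpha_indep_uptoP p_indep /alpha_indep_uptoP q_indep];
  by apply/alpha_indep_uptoP => j lt_jk; rewrite ?rpred1 ?rpredB ?rpredM ?p_indep ?q_indep.
Qed.

HB.instance Definition _ k := GRing.isSubringClosed.Build M (alpha_indep_upto k)
  (alpha_indep_upto_subring_closed k).

Lemma alpha_indep_uptoC k (c : C) : c%:MP \in alpha_indep_upto k.
Proof. by apply/alpha_indep_uptoP => j _; apply: alpha_indepC. Qed.

Lemma alpha_indep_upto_z k : (k <= m)%N -> z \in alpha_indep_upto k.
Proof. by move=> le_km; apply/alpha_indep_uptoP => j lt_jk; apply: alpha_indep_z; lia. Qed.

Lemma alpha_indep_upto_w k : (k <= m)%N -> w \in alpha_indep_upto k.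
Proof. by move=> le_km; apply/alpha_indep_uptoP => j lt_jk; apply: alpha_indep_w; lia. Qed.

Lemma alpha_indep_upto_a k : (k < m)%N -> a k \in alpha_indep_upto k.
Proof. by move=> lt_km; apply/alpha_indep_uptoP => j lt_jk; apply: alpha_indep_a; lia. Qed.

Lemma alpha_indep_upto_b k : (k < m)%N -> b k \in alpha_indep_upto k.
Proof. by move=> lt_km; apply/alpha_indep_uptoP => j lt_jk; apply: alpha_indep_b; lia. Qed.

Definition pbr_upto k (f g : M) : M :=
  \sum_(j < k) 'i%:MP * (1 - a j * b j) *
    (mderiv (vb m j) f * mderiv (va m j) g - mderiv (va m j) f * mderiv (vb m j) g).

Lemma pbrE f g : pbr f g = pbr_upto m f g.
Proof. by apply: eq_bigr => j _; rewrite cj_alpha. Qed.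

Lemma pbr_upto0 f g : pbr_upto 0 f g = 0.
Proof. exact: big_ord0. Qed.

Lemma pbr_uptoS k f g : pbr_upto k.+1 f g = pbr_upto k f g +
  'i%:MP * (1 - a k * b k) *
    (mderiv (vb m k) f * mderiv (va m k) g - mderiv (va m k) f * mderiv (vb m k) g).
Proof. exact: big_ord_recr. Qed.

Lemma pbr_upto_bilin k (c1 c2 d1 d2 f1 f2 g1 g2 : M) :
  c1 \in alpha_indep_upto k -> c2 \in alpha_indep_upto k ->
  d1 \in alpha_indep_upto k -> d2 \in alpha_indep_upto k ->
  pbr_upto k (c1 * f1 + c2 * f2) (d1 * g1 + d2 * g2) =
  c1 * d1 * pbr_upto k f1 g1 + c1 * d2 * pbr_upto k f1 g2 +
  c2 * d1 * pbr_upto k f2 g1 + c2 * d2 * pbr_upto k f2 g2.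
Proof.
move=> /alpha_indep_uptoP c1_indep /alpha_indep_uptoP c2_indep.
move=> /alpha_indep_uptoP d1_indep /alpha_indep_uptoP d2_indep.
rewrite /pbr_upto !mulr_sumr -!big_split; apply: eq_bigr => j _ /=.
have [c1a c1b] := alpha_indepP _ _ (c1_indep j (ltn_ord j)).
have [c2a c2b] := alpha_indepP _ _ (c2_indep j (ltn_ord j)).
have [d1a d1b] := alpha_indepP _ _ (d1_indep j (ltn_ord j)).
have [d2a d2b] := alpha_indepP _ _ (d2_indep j (ltn_ord j)).
rewrite !(mderivD, mderivM) c1a c1b c2a c2b d1a d1b d2a d2b; ring.
Qed.

Definition szego_step (c c' t : M) (x : M * M) : M * M :=
  (t * x.1 - c' * x.2, x.2 - c * t * x.1).

Lemma szego_step_pair c c' t x1 x2 :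
  szego_step c c' t (x1, x2) = (t * x1 - c' * x2, x2 - c * t * x1).
Proof. by []. Qed.

(* The step as the transfer matrix [[t, -c'], [-c t, 1]] acting on x, in the shape
   expected by [pbr_upto_bilin]. *)
Lemma szego_stepE c c' t x :
  szego_step c c' t x = (t * x.1 + (- c') * x.2, (- (c * t)) * x.1 + 1 * x.2).
Proof. by congr (_, _); ring. Qed.

Fixpoint szego_iter k (x : M * M) (t : M) : M * M :=
  if k is k'.+1 then szego_step (a k') (b k') t (szego_iter k' x t) else x.

Lemma szego_iterS k x t :
  szego_iter k.+1 x t = szego_step (a k) (b k) t (szego_iter k x t).
Proof. by []. Qed.

Lemma szego_iter_indep k x t j : (k <= j < m)%N ->
  x.1 \in alpha_indep j -> x.2 \in alpha_indep j -> t \in alpha_indep j ->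
  (szego_iter k x t).1 \in alpha_indep j /\ (szego_iter k x t).2 \in alpha_indep j.
Proof.
move=> /andP[le_kj lt_jm] x1_indep x2_indep t_indep.
elim: k le_kj => [|k IHk] le_kj //=.
have [X1_indep X2_indep] := IHk (ltnW le_kj).
have ak_indep : a k \in alpha_indep j by apply: alpha_indep_a; lia.
have bk_indep : b k \in alpha_indep j by apply: alpha_indep_b; lia.
by split; rewrite ?rpredB ?rpredM.
Qed.

Lemma mderiv_szego_step k (t : M) (x : M * M) : (k < m)%N ->
  x.1 \in alpha_indep k -> x.2 \in alpha_indep k -> t \in alpha_indep k ->
  let y := szego_step (a k) (b k) t x in
  [/\ mderiv (va m k) y.1 = 0, mderiv (vb m k) y.1 = - x.2,
      mderiv (va m k) y.2 = - (t * x.1) & mderiv (vb m k) y.2 = 0].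
Proof.
move=> lt_km /alpha_indepP[x1a x1b] /alpha_indepP[x2a x2b] /alpha_indepP[ta tb] /=.
rewrite !(mderivB, mderivM) !mderivXE x1a x1b x2a x2b ta tb.
rewrite -!(inj_eq val_inj) /= (val_va (ltnW lt_km)) (val_vb (ltnW lt_km)).
have [ne_ab ne_ba] : (k.*2 == k.*2.+1)%N = false /\ (k.*2.+1 == k.*2)%N = false by lia.
by rewrite ne_ab ne_ba !eqxx /=; split; ring.
Qed.

Definition mvec (p : C * C) : M * M := (p.1%:MP, p.2%:MP).

Definition det2 (p q : C * C) : C := p.1 * q.2 - p.2 * q.1.

Lemma pbr_szego_iter k (p q : C * C) : (k <= m)%N ->
  let X := szego_iter k (mvec p) z in let Y := szego_iter k (mvec q) w in
  let cz := szego_iter k (mvec (1, 0)) z in let sz := szego_iter k (mvec (0, 1)) z in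
  let cw := szego_iter k (mvec (1, 0)) w in let sw := szego_iter k (mvec (0, 1)) w in
  let d0 := (det2 p q)%:MP in let d := X.1 * Y.2 - X.2 * Y.1 in
  [/\ (z - w) * pbr_upto k X.1 Y.1 =
        - 'i%:MP * d0 * (w * cz.1 * sw.1 - z * sz.1 * cw.1),
      (z - w) * pbr_upto k X.1 Y.2 =
        'i%:MP * d * w - 'i%:MP * d0 * (w * cz.1 * sw.2 - z * sz.1 * cw.2),
      (z - w) * pbr_upto k X.2 Y.1 =
        - 'i%:MP * d * z - 'i%:MP * d0 * (w * cz.2 * sw.1 - z * sz.2 * cw.1) &
      (z - w) * pbr_upto k X.2 Y.2 =
        - 'i%:MP * d0 * (w * cz.2 * sw.2 - z * sz.2 * cw.2)].
Proof.
elim: k => [|k IHk] le_km; first by rewrite /= !pbr_upto0 /det2; split; ring.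
have lt_km : (k < m)%N by [].
move/(_ (ltnW le_km)): IHk => -[E11 E12 E21 E22].
have iter_indep r t : t \in alpha_indep k ->
    (szego_iter k (mvec r) t).1 \in alpha_indep k /\
    (szego_iter k (mvec r) t).2 \in alpha_indep k.
  by move=> t_indep; apply: szego_iter_indep => /=; rewrite ?leqnn ?lt_km ?alpha_indepC.
have [X1 X2] := iter_indep p z (alpha_indep_z lt_km).
have [Y1 Y2] := iter_indep q w (alpha_indep_w lt_km).
have [dX1a dX1b dX2a dX2b] := mderiv_szego_step lt_km X1 X2 (alpha_indep_z lt_km).
have [dY1a dY1b dY2a dY2b] := mderiv_szego_step lt_km Y1 Y2 (alpha_indep_w lt_km).
have zk := alpha_indep_upto_z (ltnW lt_km); have wk := alpha_indep_upto_w (ltnW lt_km).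
have ak := alpha_indep_upto_a lt_km; have bk := alpha_indep_upto_b lt_km.
cbv zeta; split; rewrite pbr_uptoS ?dX1a ?dX1b ?dX2a ?dX2b ?dY1a ?dY1b ?dY2a ?dY2b.
all: rewrite !szego_iterS !szego_stepE /= pbr_upto_bilin ?rpredN ?rpredM ?rpred1 //.
all: by rewrite mulrDr (mulr_lincomb4 E11 E12 E21 E22) /det2; ring.
Qed.

Definition para (beta : C) (p : C * C) (t : M) : M :=
  (szego_step beta%:MP (Num.conj beta)%:MP t (szego_iter m (mvec p) t)).1.

Lemma pbr_para beta p q :
  (z - w) * pbr (para beta p z) (para beta q w) =
  - 'i%:MP * (det2 p q)%:MP *
    (w * para beta (1, 0) z * para beta (0, 1) w - z * para beta (0, 1) z * para beta (1, 0) w).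
Proof.
have [E11 E12 E21 E22] := pbr_szego_iter p q (leqnn m).
rewrite pbrE /para !szego_stepE /= pbr_upto_bilin ?rpredN ?alpha_indep_uptoC
  ?alpha_indep_upto_z ?alpha_indep_upto_w //.
by rewrite (mulr_lincomb4 E11 E12 E21 E22); ring.
Qed.

Lemma szego_iter_mvec k p t :
  szego_iter k (mvec p) t =
  (p.1%:MP * (szego_iter k (mvec (1, 0)) t).1 + p.2%:MP * (szego_iter k (mvec (0, 1)) t).1,
   p.1%:MP * (szego_iter k (mvec (1, 0)) t).2 + p.2%:MP * (szego_iter k (mvec (0, 1)) t).2).
Proof.
elim: k => [|k IHk]; first by congr (_, _); rewrite /=; ring.
by rewrite !szego_iterS IHk /szego_step /=; congr (_, _); ring.
Qed.

Lemma para_lin beta p t :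
  para beta p t = p.1%:MP * para beta (1, 0) t + p.2%:MP * para beta (0, 1) t.
Proof. by rewrite /para [szego_iter _ (mvec p) _]szego_iter_mvec /=; ring. Qed.

Lemma coef_opuc_gt (s : C) k i : (k < i)%N -> (opuc m s k)`_i = 0.
Proof.
elim: k i => [|k IHk] [|i] //= lt_ki; first by rewrite coef1.
rewrite coefB coefXM coefCM /rstar coef_poly (IHk i); last by lia.
have -> : (i.+1 < k.+1)%N = false by lia.
by rewrite mulr0 subr0.
Qed.

Lemma rstar_opucS (s : C) k :
  rstar k.+1 (opuc m s k.+1) =
  rstar k (opuc m s k) - (s%:MP * a k)%:P * ('X * opuc m s k).
Proof.
apply/polyP => i; rewrite coefB coefCM coefXM /rstar !coef_poly /=.
rewrite coefB coefXM coefCM coef_poly rmorphB rmorphM /= cjK.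
case: i => [|i]; first by rewrite !subn0 ltnn rmorph0 !mulr0 !subr0.
rewrite subSS ltnS; case: (ltngtP i k) => [lt_ik|lt_ki|->].
- have [-> /negbTE-> -> ->] : [/\ i < k.+1, k - i != 0, k - i < k.+1 & i.+1 < k.+1]%N.
    by split; lia.
  have [-> ->] : (k - i).-1 = (k - i.+1)%N /\ (k - (k - i) = i)%N by lia.
  by rewrite cjK.
- have [/negbTE-> /negbTE->] : ~~ (i < k.+1)%N /\ ~~ (i.+1 < k.+1)%N by lia.
  by rewrite coef_opuc_gt // mulr0 subrr.
- by rewrite subnn ltnS leqnn ltnn /= rmorph0 subn0 cjK sub0r.
Qed.

Lemma opucS (s : C) k : Num.conj s = s -> (k < m)%N ->
  opuc m s k.+1 = 'X * opuc m s k - (s%:MP * b k)%:P * rstar k (opuc m s k).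
Proof. by move=> s_real lt_km /=; rewrite rmorphM /= cjC s_real cj_alpha. Qed.

Lemma opuc_szego_iter (s : C) k t : (k <= m)%N -> Num.conj s = s -> s ^+ 2 = 1 ->
  ((opuc m s k).[t], s%:MP * (rstar k (opuc m s k)).[t]) = szego_iter k (mvec (1, s)) t.
Proof.
move=> + s_real s_sqr; elim: k => [|k IHk] lt_km.
  rewrite hornerC /mvec [RHS]/= mpolyC1; congr (_, _).
  by rewrite /rstar horner_poly big_ord1 expr0 mulr1 coefC /= rmorph1 mulr1.
have ss : s%:MP * s%:MP = 1 :> M by rewrite -rmorphM -expr2 s_sqr rmorph1.
rewrite szego_iterS -IHk ?(ltnW lt_km) // rstar_opucS opucS //.
rewrite szego_step_pair; congr (_, _); rewrite !(hornerD, hornerN, hornerCM, hornerM, hornerX).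
  by ring.
set F := (opuc m s k).[t]; set G := (rstar k (opuc m s k)).[t].
transitivity (s%:MP * G - s%:MP * s%:MP * (a k * t * F)); first by ring.
by rewrite ss mul1r.
Qed.

Lemma hornerPn beta t : (Pn m beta).[t] = para beta (1, 1) t.
Proof.
rewrite /para -(opuc_szego_iter _ (leqnn m)) ?conjC1 ?expr1n // szego_step_pair /=.
by rewrite mpolyC1 mul1r !(hornerD, hornerN, hornerCM, hornerM, hornerX).
Qed.

Lemma hornerQn beta t : (Qn m beta).[t] = para beta (1, -1) t.
Proof.
rewrite /para -(opuc_szego_iter _ (leqnn m)) ?rmorphN1 ?sqrrN ?expr1n // szego_step_pair /=.
by rewrite !(hornerD, hornerN, hornerCM, hornerM, hornerX) /Psi; ring.
Qed.

Lemma mpolyC_half_double (x : M) : (2^-1 : C)%:MP * (x + x) = x.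
Proof.
transitivity ((2^-1 * 2 : C)%:MP * x); first by ring.
by rewrite mulVf ?pnatr_eq0 // mpolyC1 mul1r.
Qed.

Lemma hornerCn beta t : (Cn m beta).[t] = para beta (1, 0) t.
Proof.
rewrite /Cn hornerCM hornerD hornerPn hornerQn.
rewrite (para_lin _ (1, 1)) (para_lin _ (1, -1)) /=.
rewrite -[RHS]mpolyC_half_double; congr (_ * _).
ring.
Qed.

Lemma hornerSn beta t : (Sn m beta).[t] = para beta (0, 1) t.
Proof.
rewrite /Sn hornerCM hornerD hornerN hornerPn hornerQn.
rewrite (para_lin _ (1, 1)) (para_lin _ (1, -1)) /=.
rewrite -[RHS]mpolyC_half_double; congr (_ * _).
ring.
Qed.

Lemma z_sub_w_neq0 : z - w != 0.
Proof.
apply/eqP => /(congr1 (mderiv (vz m))); rewrite mderivB mderiv0 !mderivXE eqxx.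
have -> : (vw m == vz m) = false by rewrite -(inj_eq val_inj) /= val_vz val_vw; lia.
by move/eqP; rewrite subr0 oner_eq0.
Qed.

End Verblunsky.

Theorem theorem5p4 (C : numClosedFieldType) (n : nat) (hn : (1 <= n)%N)
    (beta : C) (hbeta : `|beta| = 1) :
  let m := n.-1 in
  let z := zz C m in
  let w := ww C m in
  let br := @pbr C m in
  let Cz := (Cn m beta).[z] in let Cw := (Cn m beta).[w] in
  let Sz := (Sn m beta).[z] in let Sw := (Sn m beta).[w] in
  let Pz := (Pn m beta).[z] in let Pw := (Pn m beta).[w] in
  let Qz := (Qn m beta).[z] in let Qw := (Qn m beta).[w] in
  [/\ br Cz Cw = 0 /\ br Sz Sw = 0,
      (z - w) * br Cz Sw = - 'i%:MP * (Cz * (w * Sw) - Cw * (z * Sz)),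
      br Pz Pw = 0 /\ br Qz Qw = 0 &
      (z - w) * br Pz Qw =
        - (('i / 2)%:MP) * ((Pz * Qw - Pw * Qz) * (z + w)
                            + (- (Qz * Qw) + Pz * Pw) * (z - w))].
Proof.
cbv zeta; rewrite !hornerCn !hornerSn !hornerPn !hornerQn.
have pbr_para_diag p : pbr (para beta p (zz C n.-1)) (para beta p (ww C n.-1)) = 0.
  by apply: (mulfI (z_sub_w_neq0 C n.-1)); rewrite pbr_para mulr0 /det2; ring.
have half_i : ('i / 2)%:MP * 2 = 'i%:MP :> M C n.-1.
  by rewrite -mpolyC_nat -rmorphM divfK ?pnatr_eq0.
split; rewrite ?pbr_para_diag //.
- by rewrite pbr_para /det2 /=; ring.
- rewrite pbr_para /det2 !(para_lin _ (1, 1)) !(para_lin _ (1, -1)) -half_i /=.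
  ring.
Qed.
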